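(* Consider the $q$-stage multistep Frank–Wolfe method (defined in the context) determined by $A\in\mathbb R^{q\times q}$, $\beta\in\mathbb R^q$, $\omega\in\mathbb R^q$ and $c>0$. For each $k\ge1$ define $\bar\gamma_i^{(k)}=\frac{c}{c+k+\omega_i}$, $\Gamma^{(k)}=\mathrm{diag}(\bar\gamma^{(k)}_1,\dots,\bar\gamma^{(k)}_q)$, $\mathbf P^{(k)}=\Gamma^{(k)}(I+A^T\Gamma^{(k)})^{-1}$ and $\mathbf z^{(k)}=q\,\mathbf P^{(k)}\beta\in\mathbb R^q$. If $0\le \mathbf z^{(k)}_i\le 1$ for all $i$ and all $k\ge1$, then $\mathbf x_0\in\mathcal D$ implies $\mathbf x_k\in\mathcal D$ for all $k\ge1$.
   Context: $\mathcal D\subset\mathbb R^n$ is nonempty, compact and convex, $f$ is differentiable, and $\mathrm{LMO}(x)$ denotes an element of $\arg\min_{s\in\mathcal D}\nabla f(x)^Ts$. The $q$-stage multistep Frank–Wolfe method with parameters $A$ (strictly lower triangular), $\beta$ (with $\sum_i\beta_i=1$), $\omega$ (with $\omega_1=0$) and $c>0$: given $\mathbf x_k$, compute successively for $i=1,\dots,q$ $\bar{\mathbf x}_i=\mathbf x_k+\sum_{j=1}^q A_{ij}\xi_j$, $\xi_i=\frac{c}{c+k+\omega_i}\big(\mathrm{LMO}(\bar{\mathbf x}_i)-\bar{\mathbf x}_i\big)$, and then set $\mathbf x_{k+1}=\mathbf x_k+\sum_{i=1}^q\beta_i\xi_i$. (This is the explicit Runge–Kutta discretization with unit step of $\dot x(t)=\frac{c}{c+t}(\mathrm{LMO}(x(t))-x(t))$.)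 *)

From HB Require Import structures.
From mathcomp Require Import all_boot all_order all_algebra.
From mathcomp Require Import all_classical all_reals all_analysis.
Set Implicit Arguments. Unset Strict Implicit. Unset Printing Implicit Defensive.
Import Order.TTheory GRing.Theory Num.Theory.
Import numFieldNormedType.Exports.
Local Open Scope classical_set_scope.
Local Open Scope ring_scope.

Section MultistepFW.
Variables (R : realType) (n q : nat).
Variables (A : 'M[R]_q) (beta omega : 'cV[R]_q) (c : R)
          (lmo : 'rV[R]_n -> 'rV[R]_n).

Definition mfw_gamma (k : nat) (i : 'I_q) : R := c / (c + k%:R + omega i 0).

Definition mfw_Gamma (k : nat) : 'M[R]_q := diag_mx (\row_i mfw_gamma k i).

Definition mfw_P (k : nat) : 'M[R]_q :=
  mfw_Gamma k *m invmx (1%:M + A^T *m mfw_Gamma k).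

Definition mfw_z (k : nat) : 'cV[R]_q := q%:R *: (mfw_P k *m beta).

(* One step k of the method from x = x_k.  Stage vectors xi_1..xi_q are
   stored as the rows of a q x n matrix; [mfw_stages k x m] has rows
   xi_1..xi_m filled in (rows >= m are 0). *)
Definition mfw_xbar (x : 'rV[R]_n) (Xi : 'M[R]_(q, n)) (i : 'I_q) : 'rV[R]_n :=
  x + \sum_(j < q) A i j *: row j Xi.

Definition mfw_xi (k : nat) (x : 'rV[R]_n) (Xi : 'M[R]_(q, n)) (i : 'I_q)
  : 'rV[R]_n :=
  mfw_gamma k i *: (lmo (mfw_xbar x Xi i) - mfw_xbar x Xi i).

Fixpoint mfw_stages (k : nat) (x : 'rV[R]_n) (m : nat) : 'M[R]_(q, n) :=
  match m with
  | 0 => 0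
  | m'.+1 =>
      let Xi := mfw_stages k x m' in
      \matrix_(i < q, j < n)
        (if nat_of_ord i == m' then mfw_xi k x Xi i 0 j else Xi i j)
  end.

Definition mfw_step (k : nat) (x : 'rV[R]_n) : 'rV[R]_n :=
  x + \sum_(i < q) beta i 0 *: row i (mfw_stages k x q).

Fixpoint mfw_iter (x0 : 'rV[R]_n) (k : nat) : 'rV[R]_n :=
  match k with
  | 0 => x0
  | k'.+1 => mfw_step k' (mfw_iter x0 k')
  end.

End MultistepFW.

From HB Require Import structures.
From mathcomp Require Import all_boot all_order all_algebra.
From mathcomp Require Import all_classical all_reals all_analysis.
Import Order.TTheory GRing.Theory Num.Theory.
Import numFieldNormedType.Exports.
Local Open Scope classical_set_scope.
Local Open Scope ring_scope.

(* Since A is strictly lower triangular, the stage matrix Xi (rows xi_i) solves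
   the triangular system (I + Gamma A) Xi = Gamma Y, where the rows of Y are the
   directions LMO(xbar_i) - x_k.  As P^T = (I + Gamma A)^-1 Gamma, this gives
   x_(k+1) = x_k + beta^T Xi = x_k + sum_i (P beta)_i (LMO(xbar_i) - x_k).
   The weights (P beta)_i = z_i / q lie in [0, 1/q], so they are nonnegative
   with sum at most 1, and x_(k+1) is a convex combination of x_k and points of
   D. *)

Lemma convex_set_comb (R : numFieldType) (E : lmodType R)
    (D : set (convex_lmodType E)) m (w : 'I_m -> R) (s : 'I_m -> E) (a : E) :
  convex_set D -> D a -> (forall i, D (s i)) ->
  (forall i, 0 <= w i) -> \sum_i w i <= 1 ->
  D (a + \sum_i w i *: (s i - a)).
Proof.
move=> convD Da; elim: m w s => [|m IHm] w s Ds w_ge0 sum_w_le1.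
  by rewrite big_ord0 addr0.
rewrite big_ord_recl; move: sum_w_le1; rewrite big_ord_recl => sum_w_le1.
have sum_w'_ge0 : 0 <= \sum_(i < m) w (lift ord0 i) by apply: sumr_ge0.
have [w0_eq1 | w0_neq1] := eqVneq (w ord0) 1.
  have w'_eq0 (i : 'I_m) : w (lift ord0 i) = 0.
    apply: (psumr_eq0P (P := xpredT) (fun i _ => w_ge0 (lift ord0 i))) => //.
    by apply/eqP; rewrite eq_le sum_w'_ge0 andbT -(lerD2l 1) addr0 -{1}w0_eq1.
  rewrite big1 => [|i _]; last by rewrite w'_eq0 scale0r.
  by rewrite w0_eq1 scale1r addr0 addrC subrK.
(* Peel off s_0: the point is w_0 s_0 + (1 - w_0) b, with b obtained by
   induction for the weights rescaled by 1 - w_0. *)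
pose t := 1 - w ord0.
have t_gt0 : 0 < t.
  by rewrite subr_gt0 lt_neqAle w0_neq1 (le_trans _ sum_w_le1) ?lerDl.
pose b := a + \sum_(i < m) (w (lift ord0 i) / t) *: (s (lift ord0 i) - a).
have Db : D b.
  apply: IHm => [i|i|]; first exact: Ds.
    by rewrite divr_ge0 ?(ltW t_gt0).
  by rewrite -mulr_suml ler_pdivrMr // mul1r lerBrDl.
have w0_le1 : w ord0 <= 1 by rewrite -subr_ge0 ltW.
have : D (w ord0 *: s ord0 + t *: b).
  have := convD _ _ (Itv01 (w_ge0 ord0) w0_le1) (mem_set (Ds ord0)).
  by move=> /(_ b (mem_set Db)); rewrite inE.
congr D; rewrite scalerDr scaler_sumr.
under eq_bigr do rewrite scalerA mulrCA mulfV ?gt_eqF // mulr1.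
by rewrite /t scalerBl scale1r scalerBr !addrA (addrC (w ord0 *: s ord0) a).
Qed.

Lemma sum_le1_of_natmul_le1 (R : numDomainType) m (w : 'I_m -> R) :
  (forall i, m%:R * w i <= 1) -> \sum_i w i <= 1.
Proof.
case: m w => [|m] w mw_le1; first by rewrite big_ord0 ler01.
rewrite -(ler_pM2l (ltr0Sn R m)) mulr1 mulr_sumr.
apply: (le_trans (y := \sum_(i < m.+1) (1 : R))).
  by apply: ler_sum => i _; exact: mw_le1.
by rewrite sumr_const card_ord.
Qed.

Lemma unitmx_1D_strictly_lower (R : comUnitRingType) m (B : 'M[R]_m) :
  (forall i j : 'I_m, (i <= j)%N -> B i j = 0) -> 1%:M + B \in unitmx.
Proof.
move=> B_lower; have trigB : is_trig_mx (1%:M + B).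
  apply/is_trig_mxP => i j lt_ij.
  by rewrite !mxE B_lower ?(ltnW lt_ij) // addr0 (ltn_eqF lt_ij : (i == j) = false).
rewrite unitmxE det_trig // big1 ?unitr1 // => i _.
by rewrite !mxE eqxx B_lower ?addr0.
Qed.

Lemma row_diag_mul (R : pzSemiRingType) m n (d : 'rV[R]_m) (M : 'M[R]_(m, n)) i :
  row i (diag_mx d *m M) = d 0 i *: row i M.
Proof. by rewrite row_mul row_diag_mx -scalemxAl -rowE. Qed.

Lemma tr_mulmx_sum_row (R : pzSemiRingType) m n (v : 'cV[R]_m) (M : 'M[R]_(m, n)) :
  v^T *m M = \sum_i v i 0 *: row i M.
Proof. by rewrite mulmx_sum_row; under eq_bigr do rewrite mxE. Qed.

Section MultistepFWStep.
Variables (R : realType) (n q : nat) (A : 'M[R]_q) (beta omega : 'cV[R]_q) (c : R)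
  (lmo : 'rV[R]_n -> 'rV[R]_n) (k : nat) (x : 'rV[R]_n).

Local Notation stages := (mfw_stages A omega c lmo k x).
Local Notation Xi := (stages q).
Local Notation xbar := (mfw_xbar A x).
Local Notation gamma := (mfw_gamma omega c k).
Local Notation Gamma := (mfw_Gamma omega c k).

Lemma mfw_xbarE (M : 'M[R]_(q, n)) i : xbar M i = x + row i (A *m M).
Proof.
rewrite /mfw_xbar row_mul mulmx_sum_row; congr (_ + _).
by apply: eq_bigr => j _; rewrite mxE.
Qed.

Lemma row_mfw_stages m (i : 'I_q) :
  (i < m)%N -> row i (stages m) = mfw_xi A omega c lmo k x (stages i) i.
Proof.
elim: m => [//|m IHm] lt_im; apply/rowP => j; rewrite [LHS]mxE mxE.
have [-> | ne_im] := eqVneq (i : nat) m; first by rewrite mxE.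
by rewrite -IHm ?mxE // -ltnS ltn_neqAle ne_im.
Qed.

Hypothesis A_strictly_lower : forall i j : 'I_q, (i <= j)%N -> A i j = 0.

Lemma mfw_xbar_stages (i : 'I_q) : xbar (stages i) i = xbar Xi i.
Proof.
rewrite /mfw_xbar; congr (_ + _); apply: eq_bigr => j _.
have [lt_ji | le_ij] := ltnP j i; last by rewrite A_strictly_lower // !scale0r.
by rewrite !row_mfw_stages.
Qed.

Lemma row_mfw_stages_fixpoint i :
  row i Xi = gamma i *: (lmo (xbar Xi i) - xbar Xi i).
Proof. by rewrite row_mfw_stages // /mfw_xi mfw_xbar_stages. Qed.

Let search_dirs : 'M[R]_(q, n) := \matrix_i (lmo (xbar Xi i) - x).

Lemma mfw_stages_system :
  (1%:M + Gamma *m A) *m Xi = Gamma *m search_dirs.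
Proof.
apply/row_matrixP => i.
rewrite mulmxDl mul1mx -mulmxA linearD /= !row_diag_mul rowK mxE.
rewrite row_mfw_stages_fixpoint mfw_xbarE -scalerDr; congr (_ *: _).
by rewrite opprD addrA subrK.
Qed.

Lemma mfw_stepE :
  mfw_step A beta omega c lmo k x =
  x + \sum_i (mfw_P A omega c k *m beta) i 0 *: (lmo (xbar Xi i) - x).
Proof.
pose N := 1%:M + A^T *m Gamma.
have NT : N^T = 1%:M + Gamma *m A.
  by rewrite linearD /= trmx1 trmx_mul trmxK /mfw_Gamma tr_diag_mx.
have N_unit : N^T \in unitmx.
  rewrite NT; apply: unitmx_1D_strictly_lower => i j le_ij.
  by rewrite mul_diag_mx mxE A_strictly_lower ?mulr0.
have PbetaT : (mfw_P A omega c k *m beta)^T = beta^T *m invmx N^T *m Gamma.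
  by rewrite !trmx_mul trmx_inv /mfw_Gamma tr_diag_mx mulmxA.
rewrite /mfw_step; congr (_ + _).
under [RHS]eq_bigr do rewrite -[_ - x](rowK (fun i => lmo (xbar Xi i) - x)).
rewrite -!tr_mulmx_sum_row PbetaT -mulmxA -mfw_stages_system -NT mulmxA.
by rewrite -(mulmxA _ (invmx _)) mulVmx ?mulmx1.
Qed.

End MultistepFWStep.

Theorem proposition1 (R : realType) (n q : nat)
  (D : set 'rV[R]_n) (f : 'rV[R]_n -> R) (lmo : 'rV[R]_n -> 'rV[R]_n)
  (A : 'M[R]_q) (beta omega : 'cV[R]_q) (c : R) (x0 : 'rV[R]_n) :
  D !=set0 -> compact D -> @convex_set R 'rV[R]_n D ->
  (forall x, differentiable f x) ->
  (forall x, D (lmo x) /\ (forall s, D s -> 'd f x (lmo x) <= 'd f x s)) ->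
  (forall i j : 'I_q, (i <= j)%N -> A i j = 0) ->
  \sum_(i < q) beta i 0 = 1 ->
  (forall i : 'I_q, nat_of_ord i = 0%N -> omega i 0 = 0) ->
  0 < c ->
  (forall (k : nat) (i : 'I_q),
      0 <= mfw_z A beta omega c k i 0 <= 1) ->
  D x0 ->
  forall k : nat, (1 <= k)%N -> D (mfw_iter A beta omega c lmo x0 k).
Proof.
move=> _ _ convD _ lmoD A_lower _ _ _ z_01 Dx0 k _.
elim: k => [//|k IHk] /=; rewrite mfw_stepE //.
pose w (i : 'I_q) : R := (mfw_P A omega c k *m beta) i 0.
have zE i : mfw_z A beta omega c k i 0 = q%:R * w i by rewrite mxE.
apply: (convex_set_comb _ _ _ _ w) => // [i | i | ].
- exact: (lmoD _).1.
- have q_gt0 : 0 < q%:R :> R by rewrite ltr0n (leq_ltn_trans (leq0n i)).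
  by rewrite -(pmulr_rge0 _ q_gt0) -zE; case/andP: (z_01 k i).
- by apply: sum_le1_of_natmul_le1 => i; rewrite -zE; case/andP: (z_01 k i).
Qed.
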